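(* Let $p>3$ be a prime and $X=\mathbb{Z}(p)$. Then there exist independent random variables $\xi_1,\xi_2,\xi_3,\xi_4$ with values in $X$ and distributions $\mu_1,\mu_2,\mu_3,\mu_4$ such that the conditional distribution of $L_2=\xi_1+\xi_2+2\xi_3+2\xi_4$ given $L_1=\xi_1+\xi_2+\xi_3+\xi_4$ is symmetric and $\mu_1,\mu_2,\mu_3,\mu_4\notin I(X)$.
   Context: $\mathbb{Z}(p)$ is the cyclic group of order $p$. $I(X)$ is the set of shifts of Haar distributions $m_K$ of subgroups $K$ of $X$. For random variables $L_1,L_2$ with values in $X$, the conditional distribution of $L_2$ given $L_1$ is called symmetric if the pairs $(L_1,L_2)$ and $(L_1,-L_2)$ are identically distributed. *)

From HB Require Import structures.
From mathcomp Require Import all_boot all_order all_algebra.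
Set Implicit Arguments. Unset Strict Implicit. Unset Printing Implicit Defensive.
Import Order.TTheory GRing.Theory Num.Theory.
Local Open Scope ring_scope.

Definition is_distribution (R : numDomainType) (T : finType) (mu : T -> R) : Prop :=
  (forall x, 0 <= mu x) /\ \sum_(x : T) mu x = 1.

Definition is_subgroup (X : finZmodType) (K : {set X}) : Prop :=
  0 \in K /\ (forall x y, x \in K -> y \in K -> x - y \in K).

(* mu \in I(X): mu is a shift of the Haar distribution m_K of a subgroup K. *)
Definition in_I (R : numFieldType) (X : finZmodType) (mu : X -> R) : Prop :=
  exists (K : {set X}) (x : X), is_subgroup K /\
    forall y, mu y = if (y - x) \in K then (#|K|%:R)^-1 else 0.

Definition joint_L (R : numDomainType) (X : finZmodType)
  (mu1 mu2 mu3 mu4 : X -> R) (a b : X) : R :=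
  \sum_(x1 : X) \sum_(x2 : X) \sum_(x3 : X) \sum_(x4 : X)
    (if (x1 + x2 + x3 + x4 == a) && (x1 + x2 + x3 *+ 2 + x4 *+ 2 == b)
     then mu1 x1 * mu2 x2 * mu3 x3 * mu4 x4 else 0).

(* The conditional distribution of L2 given L1 is symmetric:
   (L1, L2) and (L1, -L2) are identically distributed. *)
Definition cond_symmetric (R : numDomainType) (X : finZmodType)
  (mu1 mu2 mu3 mu4 : X -> R) : Prop :=
  forall a b : X, joint_L mu1 mu2 mu3 mu4 a b = joint_L mu1 mu2 mu3 mu4 a (- b).

From HB Require Import structures.
From mathcomp Require Import all_boot all_order all_algebra.
From mathcomp Require Import cyclic separable cyclotomic complex ring lra.
Set Implicit Arguments. Unset Strict Implicit. Unset Printing Implicit Defensive.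
Import Order.TTheory GRing.Theory Num.Theory.
Local Open Scope ring_scope.

(* Let z be a primitive p-th root of unity in R[i] and let
   c_w(x) = Re(w^x) be the real "cosine" attached to a root of unity w.
   For w <> 1 the function c_w sums to 0, and orthogonality of characters
   gives c_z * c_{z^2} = 0 (convolution on Z(p)) as soon as z <> z^2 and
   z^3 <> 1, i.e. when p > 3.  Tilting the uniform law by such a c,
   mu_c = (K + c)/(p K) with K = 1 + sum |c|, gives a strictly positive
   distribution which is not uniform, hence not in I(X); and the tilted laws
   of c_z, c_{z^2} convolve to the uniform law.  Taking mu1 = mu3 = mu_{c_z},
   mu2 = mu4 = mu_{c_{z^2}}, both xi1+xi2 and xi3+xi4 are uniform, so the
   joint law of (L1, L2) is uniform on X^2, which is symmetric in L2. *)

(* Every numeric closed field contains primitive n-th roots of unity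
   (the argument of cyclotomic.C_prim_root_exists, for any such field). *)
Lemma prim_root_exists (C : numClosedFieldType) (n : nat) :
  (0 < n)%N -> exists z : C, n.-primitive_root z.
Proof.
move=> n_gt0; have [r Dp] := closed_field_poly_normal ('X^n - 1 : {poly C}).
rewrite (monicP _) ?monicXnsubC // scale1r in Dp.
have rn1 : all n.-unity_root r by apply/allP=> z; rewrite -root_prod_XsubC -Dp.
have sz_r : (n <= size r)%N.
  by rewrite -ltnS -(size_prod_XsubC r id) -Dp size_XnsubC.
have [|z _ ?] := hasP (has_prim_root n_gt0 rn1 _ sz_r); last by exists z.
by rewrite -separable_prod_XsubC -Dp separable_Xn_sub_1 // pnatr_eq0 -lt0n.
Qed.

Section Characters.
Variables (F : fieldType) (p : nat).
(* N is the order of 'Z_p (equal to p whenever p > 1). *)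
Local Notation N := (Zp_trunc p).+2.

(* For w ^+ N = 1, chi w is the additive character x |-> w^x of 'Z_p. *)
Definition chi (w : F) (x : 'Z_p) : F := w ^+ x.

Lemma unity_root_neq0 (w : F) : w ^+ N = 1 -> w != 0.
Proof. by apply: contra_eqN => /eqP->; rewrite expr0n eq_sym oner_eq0. Qed.

Lemma chiD (w : F) (x y : 'Z_p) :
  w ^+ N = 1 -> chi w (x + y) = chi w x * chi w y.
Proof. by move=> wN; rewrite /chi -exprD /= expr_mod. Qed.

Lemma chiB (w : F) (x y : 'Z_p) :
  w ^+ N = 1 -> chi w (x - y) = chi w x / chi w y.
Proof.
move=> wN; have chi_y_neq0 : chi w y != 0 by rewrite expf_neq0 ?unity_root_neq0.
by rewrite -[in chi w x](subrK y x) [chi w (_ + y)]chiD // mulfK.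
Qed.

Lemma chi_sum (w : F) : w ^+ N = 1 -> w != 1 -> \sum_(x : 'Z_p) chi w x = 0.
Proof.
move=> wN w_neq1; have : (w - 1) * \sum_(i < N) w ^+ i = 0.
  by rewrite -subrX1 wN subrr.
by move/eqP; rewrite mulf_eq0 subr_eq0 (negbTE w_neq1) => /eqP.
Qed.

Lemma chi_conv0 (a b : F) (t : 'Z_p) : a ^+ N = 1 -> b ^+ N = 1 -> a != b ->
  \sum_(x : 'Z_p) chi a x * chi b (t - x) = 0.
Proof.
move=> aN bN a_neq_b; have b_neq0 := unity_root_neq0 bN.
under eq_bigr do rewrite chiB // mulrCA /chi -exprVn -exprMn -/(chi (a / b) _).
rewrite -mulr_sumr chi_sum ?mulr0 //; first by rewrite exprMn exprVn aN bN invr1 mulr1.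
by apply: contra a_neq_b => /eqP/divr1_eq ->.
Qed.
End Characters.

Section Cosines.
Local Open Scope complex_scope.
Variables (R : rcfType) (p : nat).
Local Notation N := (Zp_trunc p).+2.

(* Roots of unity have modulus one, so conjugation is inversion. *)
Lemma conj_unity_root (z : R[i]) : z ^+ N = 1 -> z^* = z^-1.
Proof.
move=> zN; have norm_z : `|z| = 1.
  by apply/eqP; rewrite -(@pexpr_eq1 _ _ N) // -normrX zN normr1.
have z_neq0 := unity_root_neq0 zN.
by rewrite -[RHS]mulr1 -(expr1n _ 2) -norm_z sqr_normc mulKf.
Qed.

Definition cosc (w : R[i]) (x : 'Z_p) : R := complex.Re (chi w x).

Lemma cosc0 (w : R[i]) : cosc w 0 = 1.
Proof. by []. Qed.

Lemma coscE (w : R[i]) (x : 'Z_p) : w ^+ N = 1 ->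
  (cosc w x)%:C = (chi w x + chi w^-1 x) / 2%:R.
Proof.
move=> wN; rewrite /cosc ReJ_add /chi; congr ((_ + _) / _).
by rewrite conj_unity_root ?exprVn // exprAC wN expr1n.
Qed.

Lemma cosc_sum (w : R[i]) : w ^+ N = 1 -> w != 1 -> \sum_x cosc w x = 0.
Proof.
move=> wN w_neq1; apply: (@complexI R); rewrite rmorph_sum rmorph0 /=.
under eq_bigr do rewrite coscE //.
rewrite -mulr_suml big_split /= !chi_sum ?addr0 ?mul0r ?invr_eq1 //.
by rewrite exprVn wN invr1.
Qed.

Lemma cosc_conv0 (a b : R[i]) (t : 'Z_p) : a ^+ N = 1 -> b ^+ N = 1 ->
  a != b -> a * b != 1 -> \sum_x cosc a x * cosc b (t - x) = 0.
Proof.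
move=> aN bN a_neq_b ab_neq1.
have [a_neq0 b_neq0] := (unity_root_neq0 aN, unity_root_neq0 bN).
have [aVN bVN] : a^-1 ^+ N = 1 /\ b^-1 ^+ N = 1 by rewrite !exprVn aN bN invr1.
have a_neq_bV : a != b^-1.
  by apply: contra ab_neq1 => /eqP->; rewrite mulVf.
have aV_neq_b : a^-1 != b.
  by apply: contra ab_neq1 => /eqP<-; rewrite mulfV.
have aV_neq_bV : a^-1 != b^-1 by rewrite (inj_eq invr_inj).
have prod4 (A A' B B' : R[i]) : (A + A') / 2%:R * ((B + B') / 2%:R) =
    4%:R^-1 * (A * B + A * B' + (A' * B + A' * B')) by field.
apply: (@complexI R); rewrite rmorph_sum rmorph0 /=.
under eq_bigr do rewrite rmorphM /= !coscE // prod4.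
by rewrite -mulr_sumr !big_split /= !chi_conv0 // !addr0 mulr0.
Qed.
End Cosines.

(* m1 and m2 convolve to the uniform law on X: if xi1 ~ m1 and xi2 ~ m2 are
   independent then xi1 + xi2 is uniformly distributed. *)
Definition uniform_conv (R : fieldType) (X : finZmodType)
    (m1 m2 : X -> R) : Prop :=
  forall t, \sum_x m1 x * m2 (t - x) = #|X|%:R^-1.

Section Tilt.
Variables (R : realFieldType) (X : finZmodType).
Implicit Types (c : X -> R) (x y : X).

Lemma card_zmod_gt0 : 0 < #|X|%:R :> R.
Proof. by rewrite ltr0n; apply/card_gt0P; exists 0. Qed.

(* The tilt of the uniform law by c is (K + c)/(#|X| K), K = 1 + sum |c|;
   K is large enough to make it strictly positive. *)
Definition tilt_mass c : R := 1 + \sum_y `|c y|.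

Definition tilt c x : R := (tilt_mass c + c x) / (#|X|%:R * tilt_mass c).

(* The tilt is strictly positive, since |c x| <= K - 1. *)
Lemma tilt_mass_gt0 c : 0 < tilt_mass c.
Proof. by rewrite /tilt_mass ltr_wpDr ?sumr_ge0. Qed.

Lemma tilt_gt0 c x : 0 < tilt c x.
Proof.
rewrite /tilt divr_gt0 ?mulr_gt0 ?tilt_mass_gt0 ?card_zmod_gt0 //.
have c_le : `|c x| <= \sum_y `|c y| by rewrite (bigD1 x) //= lerDl sumr_ge0.
have := ler_norm (- c x); rewrite normrN /tilt_mass; lra.
Qed.

Lemma tilt_dist c : \sum_x c x = 0 -> is_distribution (tilt c).
Proof.
move=> c_sum0; split=> [x|]; first exact/ltW/tilt_gt0.
rewrite /tilt -mulr_suml big_split /= c_sum0 addr0 sumr_const -[_ *+ _]mulr_natl.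
by rewrite divff // mulf_neq0 ?gt_eqF ?tilt_mass_gt0 ?card_zmod_gt0.
Qed.

Lemma tilt_inj c x y : tilt c x = tilt c y -> c x = c y.
Proof.
have D_neq0 : #|X|%:R * tilt_mass c != 0.
  by rewrite mulf_neq0 ?gt_eqF ?tilt_mass_gt0 ?card_zmod_gt0.
by move/(mulIf (invr_neq0 D_neq0))/addrI.
Qed.

Lemma sum_sub_reindex (F : X -> R) t : \sum_x F (t - x) = \sum_x F x.
Proof. by rewrite [RHS](reindex_inj (subrI t)). Qed.

Lemma tilt_conv c1 c2 : \sum_x c1 x = 0 -> \sum_x c2 x = 0 ->
  (forall t, \sum_x c1 x * c2 (t - x) = 0) -> uniform_conv (tilt c1) (tilt c2).
Proof.
move=> c1_sum0 c2_sum0 c12_conv0 t.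
have K1 := tilt_mass_gt0 c1; have K2 := tilt_mass_gt0 c2; have NX := card_zmod_gt0.
have expand x : tilt c1 x * tilt c2 (t - x) =
   (tilt_mass c1 * tilt_mass c2 + tilt_mass c1 * c2 (t - x)
     + tilt_mass c2 * c1 x + c1 x * c2 (t - x))
   / (#|X|%:R * tilt_mass c1 * (#|X|%:R * tilt_mass c2)).
  by rewrite /tilt; field; rewrite !gt_eqF.
under eq_bigr do rewrite expand.
rewrite -mulr_suml !big_split /= c12_conv0 -!mulr_sumr sum_sub_reindex.
rewrite c1_sum0 c2_sum0 sumr_const !mulr0 !addr0 -mulr_natl.
by field; rewrite !gt_eqF.
Qed.

End Tilt.

(* A law in I(X) charging every point is the Haar law of X, hence constant. *)
Lemma in_I_pos_const (R : numFieldType) (X : finZmodType) (mu : X -> R) :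
  in_I mu -> (forall x, 0 < mu x) -> forall x, mu x = mu 0.
Proof.
case=> K [x0 [_ muE]] mu_gt0.
have in_K y : y - x0 \in K.
  by move: (mu_gt0 y); rewrite muE; case: ifP => // _; rewrite ltxx.
by move=> x; rewrite !muE !in_K.
Qed.

(* A tilt by a nonzero function of zero sum is not constant, so not in I(X). *)
Lemma tilt_notI (R : realFieldType) (X : finZmodType) (c : X -> R) (x0 : X) :
  \sum_x c x = 0 -> c x0 != 0 -> ~ in_I (tilt c).
Proof.
move=> c_sum0 c_x0 /in_I_pos_const/(_ (tilt_gt0 c)) tilt_const.
have c_const x : c x = c 0 by apply: tilt_inj.
move: c_sum0; under eq_bigr do rewrite c_const.
rewrite sumr_const -[_ *+ _]mulr_natl => /eqP; rewrite mulf_eq0 -(c_const x0).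
rewrite (negbTE c_x0) orbF.
by apply/negP; exact: negbT (gt_eqF (@card_zmod_gt0 R X)).
Qed.

Section JointLaw.
Variables (R : numFieldType) (X : finZmodType).
Implicit Types (a b s u : X).

(* Indicator of the event {L1 = a, L2 = b} in terms of the partial sums
   s = xi1 + xi2 and u = xi3 + xi4 (so L1 = s + u, L2 = s + 2u). *)
Definition line_ind a b s u : R := ((s + u == a) && (s + u *+ 2 == b))%:R.

Lemma line_ind_count a b : \sum_u \sum_s line_ind a b s u = 1.
Proof.
have addr_eq x y z : (x + y == z) = (x == z - y) by rewrite -subr_eq opprK.
transitivity (\sum_u ((u == b - a)%:R : R)).
  apply: eq_bigr => u _; rewrite (bigD1 (a - u)) //= big1 ?addr0.
    rewrite /line_ind subrK eqxx mulr2n addrA subrK /=.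
    by rewrite addrC addr_eq.
  by move=> s s_neq; rewrite /line_ind addr_eq (negbTE s_neq).
by rewrite (bigD1 (b - a)) //= eqxx big1 ?addr0 // => u /negbTE->.
Qed.

Lemma joint_L_pairs (m1 m2 m3 m4 : X -> R) a b : joint_L m1 m2 m3 m4 a b =
  \sum_x1 \sum_x2 m1 x1 * m2 x2 *
    \sum_x3 \sum_x4 m3 x3 * m4 x4 * line_ind a b (x1 + x2) (x3 + x4).
Proof.
apply: eq_bigr => x1 _; apply: eq_bigr => x2 _; rewrite mulr_sumr.
apply: eq_bigr => x3 _; rewrite mulr_sumr; apply: eq_bigr => x4 _.
rewrite /line_ind mulrnDl !addrA.
by case: (_ && _); rewrite /= ?mulr1 ?mulr0 ?mulrA.
Qed.

Lemma uniform_conv_sum (m1 m2 F : X -> R) : uniform_conv m1 m2 ->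
  \sum_x1 \sum_x2 m1 x1 * m2 x2 * F (x1 + x2) = #|X|%:R^-1 * \sum_t F t.
Proof.
move=> m12_unif.
transitivity (\sum_x1 \sum_t m1 x1 * m2 (t - x1) * F t).
  apply: eq_bigr => x1 _; rewrite (reindex_inj (addIr (- x1))) /=.
  by apply: eq_bigr => t _; rewrite [x1 + _]addrC subrK.
rewrite exchange_big mulr_sumr; apply: eq_bigr => t _.
by rewrite -mulr_suml m12_unif.
Qed.

Lemma joint_L_uniform (m1 m2 m3 m4 : X -> R) a b :
  uniform_conv m1 m2 -> uniform_conv m3 m4 ->
  joint_L m1 m2 m3 m4 a b = #|X|%:R^-1 * #|X|%:R^-1.
Proof.
move=> m12_unif m34_unif; rewrite joint_L_pairs.
under eq_bigr => x1 _ do under eq_bigr => x2 _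
  do rewrite (uniform_conv_sum (line_ind a b (x1 + x2)) m34_unif).
rewrite (uniform_conv_sum (fun s => #|X|%:R^-1 * \sum_u line_ind a b s u) m12_unif).
by rewrite -mulr_sumr exchange_big line_ind_count mulr1.
Qed.
End JointLaw.

Theorem lemma6 (R : rcfType) (p : nat) (hp : prime p) (hp3 : (3 < p)%N) :
  exists mu1 mu2 mu3 mu4 : 'Z_p -> R,
    [/\ is_distribution mu1, is_distribution mu2,
        is_distribution mu3, is_distribution mu4 &
    [/\ cond_symmetric mu1 mu2 mu3 mu4,
        ~ in_I mu1, ~ in_I mu2, ~ in_I mu3 & ~ in_I mu4]].
Proof.
have [z z_prim] := prim_root_exists R[i] (prime_gt0 hp).
have zN : z ^+ (Zp_trunc p).+2 = 1 by rewrite Zp_cast ?prime_gt1 ?prim_expr_order.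
have z2N : (z ^+ 2) ^+ (Zp_trunc p).+2 = 1 by rewrite exprAC zN expr1n.
have zk_neq1 k : (0 < k < p)%N -> z ^+ k != 1.
  move=> /andP[k_gt0 k_lt_p]; rewrite -(expr0 z) (eq_prim_root_expr z_prim).
  by rewrite mod0n modn_small // -lt0n.
have z_neq1 : z != 1 by rewrite -[z]expr1 zk_neq1 ?prime_gt1.
have z2_neq1 : z ^+ 2 != 1 by rewrite zk_neq1 // (ltn_trans _ hp3).
have z_neq_z2 : z != z ^+ 2.
  by rewrite expr2 -{1}[z]mulr1 (inj_eq (mulfI (unity_root_neq0 zN))) eq_sym.
have z_z2_neq1 : z * z ^+ 2 != 1 by rewrite -exprS zk_neq1.
have sum1 := cosc_sum zN z_neq1; have sum2 := cosc_sum z2N z2_neq1.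
have unif := tilt_conv sum1 sum2 (fun t => cosc_conv0 t zN z2N z_neq_z2 z_z2_neq1).
have c1_0 : cosc z (0 : 'Z_p) != 0 by rewrite cosc0 oner_neq0.
have c2_0 : cosc (z ^+ 2) (0 : 'Z_p) != 0 by rewrite cosc0 oner_neq0.
exists (tilt (cosc z)), (tilt (cosc (z ^+ 2))), (tilt (cosc z)), (tilt (cosc (z ^+ 2))).
split; [exact: tilt_dist.. |]; split; first by move=> a b; rewrite !joint_L_uniform.
- exact: tilt_notI sum1 c1_0.
- exact: tilt_notI sum2 c2_0.
- exact: tilt_notI sum1 c1_0.
- exact: tilt_notI sum2 c2_0.
Qed.
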